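(* For each integer $n\ge1$, let $g_n(x)=(1+x^2)^{-n}$ and $\widehat{g_n}(\omega)=\int_{\mathbb R}g_n(x)e^{i\omega x}dx$. Then $$K_n:=\int_0^\infty\omega^3|\widehat{g_n}(\omega)|^2\,d\omega=\frac{2\pi^2n^2}{16^n}\binom{2n-1}{n}\binom{2n+1}{n}.$$ *)

From Stdlib Require Export Reals.
Open Scope R_scope.

Definition IntegralTo (f : R -> R) (a b I : R) : Prop :=
  exists pr : Riemann_integrable f a b, RiemannInt pr = I.

Definition ImproperInt0 (f : R -> R) (L : R) : Prop :=
  forall eps, 0 < eps -> exists M, forall b, M <= b ->
    exists I, IntegralTo f 0 b I /\ Rabs (I - L) < eps.

Definition ImproperIntR (f : R -> R) (L : R) : Prop :=
  forall eps, 0 < eps -> exists M, forall a b, a <= - M -> M <= b ->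
    exists I, IntegralTo f a b I /\ Rabs (I - L) < eps.

Definition g (n : nat) (x : R) : R := / (1 + x ^ 2) ^ n.

(* Real and imaginary parts of  \hat g_n(w) = int_R g_n(x) e^{i w x} dx
   = int_R g_n(x) cos(w x) dx + i int_R g_n(x) sin(w x) dx. *)
Definition IsFourierRe (n : nat) (w re : R) : Prop :=
  ImproperIntR (fun x => g n x * cos (w * x)) re.
Definition IsFourierIm (n : nat) (w im : R) : Prop :=
  ImproperIntR (fun x => g n x * sin (w * x)) im.

(* Write A_m for the (real, since g_m is even) Fourier transform of g_m and
   B_m(w) = int x g_m(x) sin(w x) dx.  Integrating by parts with g_m' = -2m x g_(m+1) and
   x^2 g_(m+1) = g_m - g_(m+1) gives
     w A_m = 2m B_(m+1)    and    w B_m = 2m A_(m+1) - (2m-1) A_m,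
   and differentiating under the integral gives A_m' = -B_m.  Hence w^2 A_n is a combination
   of A_(n+1) and A_(n+2), all three are smooth, bounded, and A_m = O(w^-2) at infinity.
   From these identities one checks that an explicit quadratic expression Phi in w^2 A_n and
   A_(n+1) satisfies Phi' = -w^3 A_n^2 and Phi(w) -> 0, so K_n = Phi(0), which only involves
   A_(n+1)(0); the recursion A_(m+1)(0) = (2m-1)/(2m) A_m(0) with A_1(0) = pi turns this into
   the binomial formula. *)

From Stdlib Require Import Reals Lra Lia Psatz FunctionalExtensionality.
From Coquelicot Require Import Coquelicot.
Open Scope R_scope.

(** * Real-analysis preliminaries *)

Lemma Rabs_mul_le_l a t : Rabs t <= 1 -> Rabs (a * t) <= Rabs a.
Proof. intros Ht; rewrite Rabs_mult; pose proof (Rabs_pos a); pose proof (Rabs_pos t); nra. Qed.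

Lemma sin_lipschitz a b : Rabs (sin a - sin b) <= Rabs (a - b).
Proof.
  destruct (MVT_abs sin cos b a) as [c [Hc _]]; [intros c _; apply derivable_pt_lim_sin|].
  rewrite Hc; rewrite <- (Rmult_1_l (Rabs (a - b))) at 2.
  apply Rmult_le_compat_r; [apply Rabs_pos | apply Rabs_le, COS_bound].
Qed.

Lemma cos_remainder y t : Rabs (cos (y + t) - cos y + t * sin y) <= t ^ 2.
Proof.
  set (phi := fun s => cos (y + s) - cos y + s * sin y).
  destruct (MVT_abs phi (fun s => - (sin (y + s) - sin y)) 0 t) as [c [Hc Hct]].
  { intros c _; apply is_derive_Reals; unfold phi; auto_derive; auto; ring. }
  unfold phi in Hc; rewrite Rplus_0_r, Rmult_0_l, !Rminus_0_r, Rabs_Ropp in Hc.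
  replace (cos y - cos y + 0) with 0 in Hc by ring; rewrite Rminus_0_r in Hc; rewrite Hc.
  pose proof (sin_lipschitz (y + c) y) as Hsin; replace (y + c - y) with c in Hsin by ring.
  assert (Rabs c <= Rabs t).
  { unfold Rmin, Rmax in Hct; destruct (Rle_dec 0 t).
    - rewrite (Rabs_right c), (Rabs_right t); lra.
    - rewrite (Rabs_left1 c), (Rabs_left1 t); lra. }
  rewrite <- (Rabs_pos_eq (t ^ 2)), <- RPow_abs by apply pow2_ge_0; simpl.
  rewrite Rmult_1_r; apply Rmult_le_compat; try apply Rabs_pos; lra.
Qed.

Lemma is_derive_of_remainder (F : R -> R) x l C :
  (forall h, Rabs (F (x + h) - F x - h * l) <= C * h ^ 2) -> is_derive F x l.
Proof.
  intros HF; apply is_derive_Reals; intros eps Heps.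
  assert (HC : 0 <= C) by (specialize (HF 1); pose proof (Rabs_pos (F (x + 1) - F x - 1 * l)); lra).
  assert (Hd : 0 < eps / (C + 1)) by (apply Rdiv_lt_0_compat; lra).
  exists (mkposreal _ Hd); intros h Hh Hlt; simpl in Hlt.
  assert (Hh' : 0 < Rabs h) by now apply Rabs_pos_lt.
  replace ((F (x + h) - F x) / h - l) with ((F (x + h) - F x - h * l) / h) by (field; auto).
  unfold Rdiv; rewrite Rabs_mult, Rabs_inv.
  apply (Rmult_lt_reg_r (Rabs h)); [lra|]; rewrite Rmult_assoc, Rinv_l, Rmult_1_r by lra.
  apply (Rmult_lt_compat_r (C + 1)) in Hlt; [|lra]; unfold Rdiv in Hlt.
  rewrite Rmult_assoc, Rinv_l, Rmult_1_r in Hlt by lra.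
  specialize (HF h); rewrite <- (Rabs_pos_eq (h ^ 2)), <- RPow_abs in HF by apply pow2_ge_0.
  simpl in HF; nra.
Qed.

Lemma continuous_mul_bounded_0 (h : R -> R) C : (forall x, Rabs (h x) <= C) ->
  continuous (fun x => x * h x) 0.
Proof.
  intros Hh; apply filterlim_locally; intros eps.
  assert (HC : 0 <= C) by (pose proof (Hh 0); pose proof (Rabs_pos (h 0)); lra).
  assert (Hd : 0 < eps / (C + 1)) by (apply Rdiv_lt_0_compat; [apply cond_pos | lra]).
  exists (mkposreal _ Hd); intros y Hy.
  change (Rabs (y - 0) < eps / (C + 1)) in Hy; change (Rabs (y * h y - 0 * h 0) < eps).
  rewrite Rmult_0_l, !Rminus_0_r, Rabs_mult in *.
  apply (Rmult_lt_compat_r (C + 1)) in Hy; [|lra]; unfold Rdiv in Hy.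
  rewrite Rmult_assoc, Rinv_l, Rmult_1_r in Hy by lra.
  pose proof (Hh y); pose proof (Rabs_pos y); pose proof (Rabs_pos (h y)); nra.
Qed.

Lemma is_lim_mult_R (f h : R -> R) x (lf lh : R) :
  is_lim f x lf -> is_lim h x lh -> is_lim (fun y => f y * h y) x (lf * lh).
Proof. intros Hf Hh; apply (is_lim_mult f h x lf lh Hf Hh); exact I. Qed.

Lemma is_lim_infty_of_bounded_mul (h : R -> R) C : (forall x, Rabs (x * h x) <= C) ->
  is_lim h p_infty 0 /\ is_lim h m_infty 0.
Proof.
  intros Hh.
  assert (HC : 0 <= C) by (pose proof (Hh 0); pose proof (Rabs_pos (0 * h 0)); lra).
  assert (Hsmall : forall eps : posreal, forall y, C / eps < Rabs y -> Rabs (h y - 0) < eps).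
  { intros eps y Hy; rewrite Rminus_0_r.
    pose proof (cond_pos eps); pose proof (Hh y) as Hy'; rewrite Rabs_mult in Hy'.
    apply (Rmult_lt_compat_r eps) in Hy; [|lra]; unfold Rdiv in Hy.
    rewrite Rmult_assoc, Rinv_l, Rmult_1_r in Hy by lra.
    pose proof (Rabs_pos (h y)); nra. }
  split; apply is_lim_spec; intros eps;
    assert (0 <= C / eps) by (apply Rdiv_le_0_compat; [lra | apply cond_pos]).
  - exists (C / eps); intros y Hy; apply Hsmall; rewrite Rabs_right; lra.
  - exists (- (C / eps)); intros y Hy; apply Hsmall; rewrite Rabs_left; lra.
Qed.

Lemma is_lim_atan_p_infty : is_lim atan p_infty (PI / 2).
Proof.
  apply (is_lim_ext_loc (fun x => PI / 2 - atan (/ x))).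
  { exists 0; intros y Hy; rewrite atan_inv by lra; ring. }
  assert (H : is_lim (fun x => PI / 2 - atan (/ x)) p_infty (PI / 2 - atan 0)).
  { apply is_lim_minus'; [apply is_lim_const|]; rewrite atan_0.
    apply (is_lim_comp atan (fun x => / x) p_infty 0 0).
    - pose proof (is_lim_continuity atan 0 (derivable_continuous_pt _ _ (derivable_pt_atan 0)))
        as H.
      now rewrite atan_0 in H.
    - apply (is_lim_inv (fun y => y) p_infty p_infty); [apply is_lim_id | discriminate].
    - exists 0; intros y Hy [= Hy0]; revert Hy0; apply Rinv_neq_0_compat; lra. }
  now rewrite atan_0, Rminus_0_r in H.
Qed.

Lemma is_lim_atan_m_infty : is_lim atan m_infty (- (PI / 2)).
Proof.
  apply (is_lim_ext (fun x => - atan (- x))); [intros; rewrite atan_opp; ring|].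
  apply (is_lim_opp _ _ (PI / 2)), (is_lim_comp atan (fun x => - x) m_infty (PI / 2) p_infty).
  - apply is_lim_atan_p_infty.
  - apply (is_lim_opp (fun y => y) m_infty m_infty), is_lim_id.
  - apply filter_forall; discriminate.
Qed.

Lemma ex_RInt_of_continuous (f : R -> R) a b : (forall x, continuous f x) -> ex_RInt f a b.
Proof. intros Hf; apply (ex_RInt_continuous (V := R_CompleteNormedModule)); auto. Qed.

Lemma ImproperInt0_of_derive (F f : R -> R) (l : R) : (forall x, is_derive F x (- f x)) ->
  (forall x, continuous f x) -> is_lim F p_infty l -> ImproperInt0 f (F 0 - l).
Proof.
  intros HF Hf Hl eps Heps.
  apply is_lim_spec in Hl; destruct (Hl (mkposreal _ Heps)) as [M HM].
  exists (M + 1); intros b Hb; exists (F 0 - F b); split.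
  - exists (ex_RInt_Reals_0 _ _ _ (ex_RInt_of_continuous f 0 b Hf)); rewrite <- RInt_Reals.
    assert (H : is_RInt (fun x => - f x) 0 b (F b - F 0)).
    { apply (is_RInt_derive (V := R_CompleteNormedModule) F); intros x _; [apply HF|].
      apply (continuous_opp (V := R_NormedModule) f), Hf. }
    apply (is_RInt_opp (V := R_NormedModule)), (is_RInt_ext _ f) in H;
      [|intros; change (- - f x = f x); ring].
    rewrite (is_RInt_unique _ _ _ _ H); change (- (F b - F 0) = F 0 - F b); ring.
  - specialize (HM b ltac:(lra)); simpl in HM.
    replace (F 0 - F b - (F 0 - l)) with (- (F b - l)) by ring; now rewrite Rabs_Ropp.
Qed.

(** * Improper integrals over the real line *)

Notation is_RInt_line f l :=
  (@is_RInt_gen R_NormedModule f (Rbar_locally m_infty) (Rbar_locally p_infty) l).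
Notation ex_RInt_line f :=
  (@ex_RInt_gen R_NormedModule f (Rbar_locally m_infty) (Rbar_locally p_infty)).
Notation RInt_line f :=
  (@RInt_gen R_CompleteNormedModule f (Rbar_locally m_infty) (Rbar_locally p_infty)).

Lemma ImproperIntR_is_RInt_line (f : R -> R) (l : R) : ImproperIntR f l <-> is_RInt_line f l.
Proof.
  split.
  - intros Hf P [eps HP].
    destruct (Hf eps) as [M HM]; [apply cond_pos|].
    apply (Filter_prod _ _ _ (fun a => a <= - M) (fun b => M <= b)).
    + exists (- M); intros; lra.
    + exists M; intros; lra.
    + intros a b Ha Hb; destruct (HM a b Ha Hb) as [I [[pr HI] HIl]].
      exists I; split; [|apply HP; exact HIl].
      rewrite <- HI, <- RInt_Reals.
      apply (RInt_correct (V := R_CompleteNormedModule)), (ex_RInt_Reals_1 _ _ _ pr).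
  - intros Hf eps Heps.
    destruct (Hf (ball l (mkposreal eps Heps))) as [Q1 Q2 [M1 HQ1] [M2 HQ2] HQ].
    { apply locally_ball. }
    exists (Rabs M1 + Rabs M2 + 1); intros a b Ha Hb.
    destruct (HQ a b) as [I [HI HIl]].
    { apply HQ1; pose proof (Rle_abs (- M1)); rewrite Rabs_Ropp in *.
      pose proof (Rabs_pos M2); lra. }
    { apply HQ2; pose proof (Rle_abs M2); pose proof (Rabs_pos M1); lra. }
    exists I; split; [|exact HIl].
    exists (ex_RInt_Reals_0 _ _ _ (ex_intro _ I HI)).
    rewrite <- RInt_Reals; now apply is_RInt_unique.
Qed.

Lemma is_RInt_line_unique (f : R -> R) (l1 l2 : R) :
  is_RInt_line f l1 -> is_RInt_line f l2 -> l1 = l2.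
Proof.
  intros H1 H2.
  rewrite <- (is_RInt_gen_unique (V := R_CompleteNormedModule) f l1 H1).
  now apply (is_RInt_gen_unique (V := R_CompleteNormedModule)).
Qed.

Lemma is_RInt_line_ext (f h : R -> R) l :
  (forall x, f x = h x) -> is_RInt_line f l -> is_RInt_line h l.
Proof. intros Hfh; apply is_RInt_gen_ext, filter_forall; intros; apply Hfh. Qed.

Lemma is_RInt_line_plus (f h : R -> R) lf lh :
  is_RInt_line f lf -> is_RInt_line h lh -> is_RInt_line (fun x => f x + h x) (lf + lh).
Proof.
  apply (is_RInt_gen_plus (V := R_NormedModule) (Fa := Rbar_locally m_infty)
    (Fb := Rbar_locally p_infty)).
Qed.

Lemma is_RInt_line_scal (f : R -> R) c l :
  is_RInt_line f l -> is_RInt_line (fun x => c * f x) (c * l).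
Proof.
  apply (is_RInt_gen_scal (V := R_NormedModule) (Fa := Rbar_locally m_infty)
    (Fb := Rbar_locally p_infty)).
Qed.

Lemma is_RInt_gen_filterlim (Fa Fb : (R -> Prop) -> Prop) {FFa : Filter Fa} {FFb : Filter Fb}
  (f : R -> R) l : (forall x, continuous f x) ->
  is_RInt_gen (V := R_NormedModule) f Fa Fb l <->
  filterlim (fun ab => RInt f (fst ab) (snd ab)) (filter_prod Fa Fb) (locally l).
Proof.
  intros Hf; split.
  - intros H P HP; generalize (H P HP); unfold filtermapi, filtermap; apply filter_imp.
    intros [a b] [I [HI HPI]]; simpl in *.
    now rewrite (is_RInt_unique _ _ _ _ HI).
  - apply filterlimi_lim_ext; intros [a b].
    apply (RInt_correct (V := R_CompleteNormedModule)), ex_RInt_of_continuous, Hf.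
Qed.

Lemma is_RInt_line_derive (F f : R -> R) (la lb : R) :
  (forall x, is_derive F x (f x)) -> (forall x, continuous f x) ->
  is_lim F m_infty la -> is_lim F p_infty lb -> is_RInt_line f (lb - la).
Proof.
  intros HF Hf Ha Hb.
  assert (HD : forall x, Derive F x = f x) by (intros; now apply is_derive_unique).
  apply (is_RInt_gen_ext (Derive F)).
  - apply filter_forall; intros ab x _; apply HD.
  - apply is_RInt_gen_Derive; [| |exact Ha|exact Hb].
    + apply filter_forall; intros ab x _; eexists; apply HF.
    + apply filter_forall; intros ab x _.
      apply (continuous_ext f); [intros; now rewrite HD | apply Hf].
Qed.

Lemma abs_RInt_le_abs_RInt (f h : R -> R) a b :
  (forall x, continuous f x) -> (forall x, continuous h x) -> (forall x, Rabs (f x) <= h x) ->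
  Rabs (RInt f a b) <= Rabs (RInt h a b).
Proof.
  intros Hf Hh Hfh.
  assert (Hle : forall u v, u <= v -> Rabs (RInt f u v) <= Rabs (RInt h u v)).
  { intros u v Huv.
    eapply Rle_trans; [apply abs_RInt_le; [exact Huv | apply ex_RInt_of_continuous, Hf]|].
    eapply Rle_trans; [apply RInt_le; [exact Huv| | |intros x _; apply Hfh]|apply Rle_abs].
    - apply ex_RInt_of_continuous; intros x.
      apply (continuous_comp f Rabs); [apply Hf | apply continuous_Rabs].
    - apply ex_RInt_of_continuous, Hh. }
  destruct (Rle_lt_dec a b) as [Hab|Hba]; [now apply Hle|].
  rewrite <- (opp_RInt_swap f), <- (opp_RInt_swap h) by (apply ex_RInt_of_continuous; assumption).
  unfold opp; simpl; rewrite !Rabs_Ropp; apply Hle; lra.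
Qed.

(* Cauchy criterion: int_a^b f - int_a'^b' f consists of an integral between a and a' and one
   between b and b', each dominated by a difference of two integrals of h near its limit. *)
Lemma ex_RInt_line_dominated (f h : R -> R) lh :
  (forall x, continuous f x) -> (forall x, continuous h x) -> (forall x, Rabs (f x) <= h x) ->
  is_RInt_line h lh -> ex_RInt_line f.
Proof.
  intros Hf Hh Hfh Hlh.
  apply (is_RInt_gen_filterlim _ _ h lh Hh) in Hlh.
  destruct (proj1 (filterlim_locally_cauchy
    (F := filter_prod (Rbar_locally m_infty) (Rbar_locally p_infty))
    (fun ab => RInt f (fst ab) (snd ab)))) as [L HL].
  - intros eps.
    destruct (proj1 (filterlim_locally _ _) Hlh (pos_div_2 (pos_div_2 eps))) as [Q1 Q2 HQ1 HQ2 HQ].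
    exists (fun ab => Q1 (fst ab) /\ Q2 (snd ab)); split.
    + apply (Filter_prod _ _ _ Q1 Q2); auto.
    + intros [a b] [a' b'] [Ha Hb] [Ha' Hb']; simpl in *.
      assert (HI : forall u v, Q1 u -> Q2 v -> Rabs (RInt h u v - lh) < eps / 2 / 2) by apply HQ.
      assert (Hd : forall x y, Rabs (x - lh) < eps / 2 / 2 -> Rabs (y - lh) < eps / 2 / 2 ->
                               Rabs (x - y) < eps / 2).
      { intros x y Hx Hy; apply Rabs_def2 in Hx, Hy; apply Rabs_def1; lra. }
      assert (Cf : forall u v w, RInt f u v + RInt f v w = RInt f u w)
        by (intros; apply (RInt_Chasles (V := R_CompleteNormedModule));
            apply ex_RInt_of_continuous, Hf).
      assert (Ch : forall u v w, RInt h u v + RInt h v w = RInt h u w)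
        by (intros; apply (RInt_Chasles (V := R_CompleteNormedModule));
            apply ex_RInt_of_continuous, Hh).
      change (Rabs (RInt f a' b' - RInt f a b) < eps).
      replace (RInt f a' b' - RInt f a b) with (RInt f a' a + RInt f b b')
        by (rewrite <- (Cf a' a b'), <- (Cf a b b'); ring).
      pose proof (abs_RInt_le_abs_RInt f h a' a Hf Hh Hfh) as Hleft.
      pose proof (abs_RInt_le_abs_RInt f h b b' Hf Hh Hfh) as Hright.
      replace (RInt h a' a) with (RInt h a' b - RInt h a b) in Hleft
        by (rewrite <- (Ch a' a b); ring).
      replace (RInt h b b') with (RInt h a' b' - RInt h a' b) in Hright
        by (rewrite <- (Ch a' b b'); ring).
      pose proof (Hd _ _ (HI a' b Ha' Hb) (HI a b Ha Hb)).
      pose proof (Hd _ _ (HI a' b' Ha' Hb') (HI a' b Ha' Hb)).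
      pose proof (Rabs_triang (RInt f a' a) (RInt f b b')); lra.
  - exists L; now apply (is_RInt_gen_filterlim _ _ f L Hf).
Qed.

Lemma abs_RInt_line_le (f h : R -> R) lf lh : (forall x, Rabs (f x) <= h x) ->
  is_RInt_line f lf -> is_RInt_line h lh -> Rabs lf <= lh.
Proof.
  intros Hfh Hf Hh.
  apply (RInt_gen_norm (V := R_CompleteNormedModule) f h lf lh); [| |exact Hf|exact Hh].
  - apply (Filter_prod _ _ _ (fun a => a < 0) (fun b => 0 < b)).
    + now exists 0.
    + now exists 0.
    + simpl; intros; lra.
  - apply filter_forall; intros; apply Hfh.
Qed.

Lemma RInt_odd (f : R -> R) b : (forall x, continuous f x) -> (forall x, f (- x) = - f x) ->
  RInt f (- b) b = 0.
Proof.
  intros Hf Hodd.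
  assert (H : is_RInt f (- b) (- - b) (RInt f (- b) b))
    by (rewrite Ropp_involutive;
        apply (RInt_correct (V := R_CompleteNormedModule)), ex_RInt_of_continuous, Hf).
  apply (is_RInt_comp_opp (V := R_NormedModule)), (is_RInt_ext _ f) in H.
  2: { intros x _; change (- f (- x) = f x); rewrite Hodd; apply Ropp_involutive. }
  apply (is_RInt_unique (V := R_CompleteNormedModule)) in H.
  rewrite <- (opp_RInt_swap (V := R_CompleteNormedModule)) in H
    by (apply ex_RInt_of_continuous, Hf).
  change (- RInt f (- b) b = RInt f (- b) b) in H; lra.
Qed.

Lemma is_RInt_line_odd (f : R -> R) l : (forall x, continuous f x) -> (forall x, f (- x) = - f x) ->
  is_RInt_line f l -> l = 0.
Proof.
  intros Hf Hodd Hl; apply (is_RInt_gen_filterlim _ _ f l Hf) in Hl.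
  assert (Hsym : filterlim (fun b => RInt f (- b) b) (Rbar_locally p_infty) (locally l)).
  { eapply (filterlim_comp _ _ _ (fun b => (- b, b)) (fun ab => RInt f (fst ab) (snd ab)));
      [|exact Hl].
    apply filterlim_pair; [apply (is_lim_opp _ _ _ (is_lim_id p_infty)) | apply filterlim_id]. }
  apply (filterlim_ext _ (fun _ => 0)) in Hsym; [|intros; apply RInt_odd; auto].
  symmetry; exact (filterlim_locally_unique _ _ _ (filterlim_const 0) Hsym).
Qed.

(** * The functions g_m *)

Lemma one_plus_sqr_pos x : 0 < 1 + x ^ 2.
Proof. nra. Qed.

Lemma g_pos m x : 0 < g m x.
Proof. apply Rinv_0_lt_compat, pow_lt, one_plus_sqr_pos. Qed.

Lemma g_1 x : g 1 x = / (1 + x ^ 2).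
Proof. unfold g; now rewrite pow_1. Qed.

Lemma g_S m x : g (S m) x = g m x * g 1 x.
Proof.
  pose proof (one_plus_sqr_pos x); pose proof (pow_lt _ m (one_plus_sqr_pos x)).
  unfold g; rewrite <- tech_pow_Rmult, pow_1; field; lra.
Qed.

Lemma g_le_1 m x : g m x <= 1.
Proof.
  rewrite <- Rinv_1; apply Rinv_le_contravar; [lra|].
  apply pow_R1_Rle; nra.
Qed.

Lemma g_le_g_1 m x : (1 <= m)%nat -> g m x <= g 1 x.
Proof.
  induction 1 as [|k _ IH]; [lra|].
  rewrite g_S; pose proof (g_le_1 k x); pose proof (g_pos 1 x); nra.
Qed.

Lemma sqr_mul_g_S m x : x ^ 2 * g (S m) x = g m x - g (S m) x.
Proof. rewrite g_S, g_1; pose proof (one_plus_sqr_pos x); field; lra. Qed.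

Lemma abs_mul_g_1_le_1 x : Rabs x * g 1 x <= 1.
Proof.
  rewrite g_1; pose proof (one_plus_sqr_pos x).
  apply (Rmult_le_reg_r (1 + x ^ 2)); [lra|].
  rewrite Rmult_assoc, Rinv_l by lra.
  destruct (Rcase_abs x); [rewrite Rabs_left | rewrite Rabs_right]; nra.
Qed.

Lemma sqr_mul_g_1_le_1 x : x ^ 2 * g 1 x <= 1.
Proof.
  replace (x ^ 2 * g 1 x) with (g 0 x - g 1 x) by (rewrite <- sqr_mul_g_S; ring).
  unfold g at 1; pose proof (g_pos 1 x); simpl; lra.
Qed.

Lemma abs_mul_g_le_g_1 m x : (2 <= m)%nat -> Rabs x * g m x <= g 1 x.
Proof.
  intros Hm; destruct m as [|m]; [lia|].
  rewrite g_S; pose proof (abs_mul_g_1_le_1 x); pose proof (g_pos 1 x).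
  pose proof (g_pos m x); pose proof (g_le_g_1 m x ltac:(lia)); nra.
Qed.

Lemma sqr_mul_g_le_g_1 m x : (2 <= m)%nat -> x ^ 2 * g m x <= g 1 x.
Proof.
  intros Hm; destruct m as [|m]; [lia|].
  rewrite sqr_mul_g_S; pose proof (g_le_g_1 m x ltac:(lia)); pose proof (g_pos (S m) x); lra.
Qed.

Lemma is_derive_g m x : is_derive (g m) x (- 2 * INR m * x * g (S m) x).
Proof.
  pose proof (one_plus_sqr_pos x); unfold g; auto_derive.
  - apply pow_nonzero; lra.
  - destruct m as [|m]; simpl; field; [lra|split; [apply pow_nonzero|]; lra].
Qed.

Lemma continuous_g m x : continuous (g m) x.
Proof.
  apply (ex_derive_continuous (K := R_AbsRing) (V := R_NormedModule)).
  eexists; apply is_derive_g.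
Qed.

Ltac solve_continuous :=
  apply (ex_derive_continuous (K := R_AbsRing) (V := R_NormedModule));
  auto_derive; repeat split; eexists; apply is_derive_g.

Lemma is_RInt_line_g_1 : is_RInt_line (g 1) PI.
Proof.
  replace PI with (PI / 2 - - (PI / 2)) by field.
  apply is_RInt_line_derive with atan.
  - intros x; rewrite g_1; replace (x ^ 2) with x² by (unfold Rsqr; ring); apply is_derive_atan.
  - intros x; apply continuous_g.
  - apply is_lim_atan_m_infty.
  - apply is_lim_atan_p_infty.
Qed.

Lemma ex_RInt_line_dominated_g_1 (f : R -> R) : (forall x, continuous f x) ->
  (forall x, Rabs (f x) <= g 1 x) -> ex_RInt_line f.
Proof.
  intros Hf Hfg; exact (ex_RInt_line_dominated f (g 1) PI Hf (continuous_g 1) Hfg is_RInt_line_g_1).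
Qed.

Lemma abs_RInt_line_le_g_1 (f : R -> R) C l : (forall x, Rabs (f x) <= C * g 1 x) ->
  is_RInt_line f l -> Rabs l <= C * PI.
Proof.
  intros Hfg Hf; apply (abs_RInt_line_le f (fun x => C * g 1 x)); auto.
  apply (is_RInt_line_scal (g 1) C PI is_RInt_line_g_1).
Qed.

Lemma abs_g_cos_le m w x : (1 <= m)%nat -> Rabs (g m x * cos (w * x)) <= g 1 x.
Proof.
  intros Hm; eapply Rle_trans; [apply Rabs_mul_le_l, Rabs_le, COS_bound|].
  rewrite Rabs_pos_eq by (apply Rlt_le, g_pos); now apply g_le_g_1.
Qed.

Lemma abs_g_sin_le m w x : (1 <= m)%nat -> Rabs (g m x * sin (w * x)) <= g 1 x.
Proof.
  intros Hm; eapply Rle_trans; [apply Rabs_mul_le_l, Rabs_le, SIN_bound|].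
  rewrite Rabs_pos_eq by (apply Rlt_le, g_pos); now apply g_le_g_1.
Qed.

Lemma abs_xg_sin_le m w x : (2 <= m)%nat -> Rabs (x * g m x * sin (w * x)) <= g 1 x.
Proof.
  intros Hm; eapply Rle_trans; [apply Rabs_mul_le_l, Rabs_le, SIN_bound|].
  rewrite Rabs_mult, (Rabs_pos_eq (g m x)) by (apply Rlt_le, g_pos).
  now apply abs_mul_g_le_g_1.
Qed.

(** * The cosine transforms and their recursions *)

(* [Fcos m] is the Fourier transform of [g m]; its sine part vanishes ([is_RInt_line_g_sin]). *)
Definition Fcos (m : nat) (w : R) : R := RInt_line (fun x => g m x * cos (w * x)).

Definition Fxsin (m : nat) (w : R) : R := RInt_line (fun x => x * g m x * sin (w * x)).

Lemma is_RInt_line_Fcos m w : (1 <= m)%nat ->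
  is_RInt_line (fun x => g m x * cos (w * x)) (Fcos m w).
Proof.
  intros Hm; apply (RInt_gen_correct (V := R_CompleteNormedModule)), (ex_RInt_line_dominated_g_1 _).
  - intros x; solve_continuous.
  - intros x; now apply abs_g_cos_le.
Qed.

Lemma is_RInt_line_Fxsin m w : (2 <= m)%nat ->
  is_RInt_line (fun x => x * g m x * sin (w * x)) (Fxsin m w).
Proof.
  intros Hm; apply (RInt_gen_correct (V := R_CompleteNormedModule)), (ex_RInt_line_dominated_g_1 _).
  - intros x; solve_continuous.
  - intros x; now apply abs_xg_sin_le.
Qed.

Lemma is_RInt_line_g_sin m w : (1 <= m)%nat -> is_RInt_line (fun x => g m x * sin (w * x)) 0.
Proof.
  intros Hm.
  assert (Hc : forall x, continuous (fun x => g m x * sin (w * x)) x) by (intros; solve_continuous).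
  destruct (ex_RInt_line_dominated_g_1 _ Hc (fun x => abs_g_sin_le m w x Hm)) as [l Hl].
  replace 0 with l; [exact Hl|].
  apply (is_RInt_line_odd _ l Hc); [|exact Hl].
  intros x; unfold g; replace ((- x) ^ 2) with (x ^ 2) by ring.
  replace (w * - x) with (- (w * x)) by ring; rewrite sin_neg; ring.
Qed.

Lemma abs_Fcos_le m w : (1 <= m)%nat -> Rabs (Fcos m w) <= PI.
Proof.
  intros Hm; apply (abs_RInt_line_le (fun x => g m x * cos (w * x)) (g 1));
    auto using is_RInt_line_Fcos, is_RInt_line_g_1.
  intros x; now apply abs_g_cos_le.
Qed.

Lemma abs_Fxsin_le m w : (2 <= m)%nat -> Rabs (Fxsin m w) <= PI.
Proof.
  intros Hm; apply (abs_RInt_line_le (fun x => x * g m x * sin (w * x)) (g 1));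
    auto using is_RInt_line_Fxsin, is_RInt_line_g_1.
  intros x; now apply abs_xg_sin_le.
Qed.

Lemma Fcos_Fxsin m w : (1 <= m)%nat -> w * Fcos m w = 2 * INR m * Fxsin (S m) w.
Proof.
  intros Hm.
  assert (Hibp : is_RInt_line
    (fun x => w * (g m x * cos (w * x)) + - (2 * INR m) * (x * g (S m) x * sin (w * x))) (0 - 0)).
  { assert (Hvanish : forall x, Rabs (x * (g m x * sin (w * x))) <= 1).
    { intros x; rewrite <- Rmult_assoc.
      eapply Rle_trans; [apply Rabs_mul_le_l, Rabs_le, SIN_bound|].
      rewrite Rabs_mult, (Rabs_pos_eq (g m x)) by (apply Rlt_le, g_pos).
      eapply Rle_trans; [|apply abs_mul_g_1_le_1].
      apply Rmult_le_compat_l; [apply Rabs_pos | now apply g_le_g_1]. }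
    destruct (is_lim_infty_of_bounded_mul _ _ Hvanish) as [Hplus Hminus].
    apply (is_RInt_line_derive (fun x => g m x * sin (w * x))); auto.
    - intros x; pose proof (is_derive_g m x) as Hg; auto_derive; [eexists; eauto|].
      replace (Derive (fun y => g m y) x) with (-2 * INR m * x * g (S m) x)
        by (symmetry; now apply is_derive_unique); ring.
    - intros x; solve_continuous. }
  pose proof (is_RInt_line_unique _ _ _ Hibp
    (is_RInt_line_plus _ _ _ _ (is_RInt_line_scal _ w _ (is_RInt_line_Fcos m w Hm))
      (is_RInt_line_scal _ (- (2 * INR m)) _ (is_RInt_line_Fxsin (S m) w ltac:(lia))))); lra.
Qed.

Lemma is_RInt_line_ibp_cos m w : (1 <= m)%nat -> is_RInt_line
  (fun x => 2 * INR m * (g (S m) x * cos (w * x)) + - (2 * INR m - 1) * (g m x * cos (w * x))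
            + - w * (x * g m x * sin (w * x))) (0 - 0).
Proof.
  intros Hm.
  assert (Hvanish : forall x, Rabs (x * (x * g m x * cos (w * x))) <= 1).
  { intros x; rewrite <- Rmult_assoc; eapply Rle_trans; [apply Rabs_mul_le_l, Rabs_le, COS_bound|].
    replace (x * (x * g m x)) with (x ^ 2 * g m x) by ring.
    rewrite Rabs_pos_eq by (apply Rmult_le_pos; [apply pow2_ge_0 | apply Rlt_le, g_pos]).
    eapply Rle_trans; [|apply sqr_mul_g_1_le_1].
    apply Rmult_le_compat_l; [apply pow2_ge_0 | now apply g_le_g_1]. }
  destruct (is_lim_infty_of_bounded_mul _ _ Hvanish) as [Hplus Hminus].
  apply (is_RInt_line_derive (fun x => x * g m x * cos (w * x))); auto.
  - intros x; pose proof (is_derive_g m x) as Hg; auto_derive; [eexists; eauto|].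
    replace (Derive (fun y => g m y) x) with (-2 * INR m * x * g (S m) x)
      by (symmetry; now apply is_derive_unique).
    replace (g m x) with (x ^ 2 * g (S m) x + g (S m) x) by (rewrite sqr_mul_g_S; ring); ring.
  - intros x; solve_continuous.
Qed.

Lemma Fxsin_Fcos m w : (2 <= m)%nat ->
  w * Fxsin m w = 2 * INR m * Fcos (S m) w - (2 * INR m - 1) * Fcos m w.
Proof.
  intros Hm.
  pose proof (is_RInt_line_unique _ _ _ (is_RInt_line_ibp_cos m w ltac:(lia))
    (is_RInt_line_plus _ _ _ _
      (is_RInt_line_plus _ _ _ _
        (is_RInt_line_scal _ (2 * INR m) _ (is_RInt_line_Fcos (S m) w ltac:(lia)))
        (is_RInt_line_scal _ (- (2 * INR m - 1)) _ (is_RInt_line_Fcos m w ltac:(lia))))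
      (is_RInt_line_scal _ (- w) _ (is_RInt_line_Fxsin m w Hm)))); lra.
Qed.

Lemma Fcos_S_0 m : (1 <= m)%nat -> 2 * INR m * Fcos (S m) 0 = (2 * INR m - 1) * Fcos m 0.
Proof.
  intros Hm.
  pose proof (is_RInt_line_ibp_cos m 0 Hm) as Hibp.
  apply (is_RInt_line_ext _ (fun x => 2 * INR m * (g (S m) x * cos (0 * x))
                                   + - (2 * INR m - 1) * (g m x * cos (0 * x)))) in Hibp;
    [|intros; ring].
  pose proof (is_RInt_line_unique _ _ _ Hibp
    (is_RInt_line_plus _ _ _ _
      (is_RInt_line_scal _ (2 * INR m) _ (is_RInt_line_Fcos (S m) 0 ltac:(lia)))
      (is_RInt_line_scal _ (- (2 * INR m - 1)) _ (is_RInt_line_Fcos m 0 Hm)))); lra.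
Qed.

Lemma is_derive_Fcos m w : (2 <= m)%nat -> is_derive (Fcos m) w (- Fxsin m w).
Proof.
  intros Hm; apply (is_derive_of_remainder _ _ _ PI); intros h.
  pose proof (is_RInt_line_plus _ _ _ _
    (is_RInt_line_plus _ _ _ _
      (is_RInt_line_Fcos m (w + h) ltac:(lia))
      (is_RInt_line_scal _ (-1) _ (is_RInt_line_Fcos m w ltac:(lia))))
    (is_RInt_line_scal _ h _ (is_RInt_line_Fxsin m w Hm))) as Hcomb.
  replace (Fcos m (w + h) - Fcos m w - h * - Fxsin m w)
    with (Fcos m (w + h) + -1 * Fcos m w + h * Fxsin m w) by ring.
  rewrite (Rmult_comm PI); eapply (abs_RInt_line_le_g_1 _ (h ^ 2) _); [intros x|exact Hcomb].
  simpl.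
  replace (g m x * cos ((w + h) * x) + -1 * (g m x * cos (w * x)) + h * (x * g m x * sin (w * x)))
    with (g m x * (cos (w * x + h * x) - cos (w * x) + h * x * sin (w * x)))
    by (rewrite Rmult_plus_distr_r; ring).
  rewrite Rabs_mult, Rabs_pos_eq by (apply Rlt_le, g_pos).
  eapply Rle_trans; [apply Rmult_le_compat_l; [apply Rlt_le, g_pos | apply cos_remainder]|].
  replace (g m x * (h * x) ^ 2) with (h ^ 2 * (x ^ 2 * g m x)) by ring.
  apply Rmult_le_compat_l; [apply pow2_ge_0 | now apply sqr_mul_g_le_g_1].
Qed.

Lemma Fcos_1_0 : Fcos 1 0 = PI.
Proof.
  apply (is_RInt_line_unique (g 1)); [|apply is_RInt_line_g_1].
  apply (is_RInt_line_ext (fun x => g 1 x * cos (0 * x))); [|now apply is_RInt_line_Fcos].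
  intros x; rewrite Rmult_0_l, cos_0; ring.
Qed.

Lemma C_odd_central k :
  Binomial.C (S (2 * k)) k = (2 * INR k + 1) / (INR k + 1) * Binomial.C (2 * k) k.
Proof.
  rewrite pascal_step2 by lia; replace (S (2 * k) - k)%nat with (S k) by lia.
  rewrite !S_INR, mult_INR; simpl (INR 2); reflexivity.
Qed.

Lemma C_central_half k : Binomial.C (2 * S k) (S k) = 2 * Binomial.C (2 * S k - 1) (S k).
Proof.
  replace (2 * S k)%nat with (S (S (2 * k))) at 1 by lia.
  replace (2 * S k - 1)%nat with (S (2 * k)) by lia.
  rewrite pascal_step2 by lia; replace (S (S (2 * k)) - S k)%nat with (S k) by lia.
  rewrite !S_INR, mult_INR; simpl (INR 2); pose proof (pos_INR k); field; lra.
Qed.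

Lemma C_central_S k :
  Binomial.C (2 * S k) (S k) = 2 * (2 * INR k + 1) / (INR k + 1) * Binomial.C (2 * k) k.
Proof.
  rewrite C_central_half; replace (2 * S k - 1)%nat with (S (2 * k)) by lia.
  rewrite pascal_step3 by lia; replace (S (2 * k) - k)%nat with (S k) by lia.
  rewrite C_odd_central; pose proof (pos_INR k); rewrite S_INR; field; lra.
Qed.

Lemma Fcos_0 k : Fcos (S k) 0 = PI * Binomial.C (2 * k) k / 4 ^ k.
Proof.
  induction k as [|k IH].
  - rewrite Fcos_1_0; unfold Binomial.C; simpl; field.
  - pose proof (Fcos_S_0 (S k) ltac:(lia)) as Hrec; rewrite IH in Hrec.
    rewrite C_central_S; rewrite S_INR in *; pose proof (pos_INR k).
    assert (0 < 4 ^ k) by (apply pow_lt; lra).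
    simpl pow; apply (Rmult_eq_reg_l (2 * (INR k + 1))); [|lra].
    rewrite Hrec; field; lra.
Qed.

(** * An explicit primitive of w^3 Fcos_n(w)^2 *)

(* Equal to [w ^ 2 * Fcos n w] ([sqr_mul_Fcos]), but visibly differentiable at every w. *)
Definition w2Fcos (n : nat) (w : R) : R :=
  2 * INR n * (2 * (INR n + 1) * Fcos (S (S n)) w - (2 * INR n + 1) * Fcos (S n) w).

Lemma sqr_mul_Fcos n w : (1 <= n)%nat -> w ^ 2 * Fcos n w = w2Fcos n w.
Proof.
  intros Hn; unfold w2Fcos.
  replace (w ^ 2 * Fcos n w) with (w * (w * Fcos n w)) by ring.
  rewrite Fcos_Fxsin by lia.
  replace (w * (2 * INR n * Fxsin (S n) w)) with (2 * INR n * (w * Fxsin (S n) w)) by ring.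
  rewrite Fxsin_Fcos by lia; rewrite S_INR; ring.
Qed.

Lemma abs_mul_Fcos_le m w : (1 <= m)%nat -> Rabs (w * Fcos m w) <= 2 * INR m * PI.
Proof.
  intros Hm; rewrite Fcos_Fxsin, Rabs_mult, Rabs_pos_eq by (auto; pose proof (pos_INR m); lra).
  apply Rmult_le_compat_l; [pose proof (pos_INR m); lra | apply abs_Fxsin_le; lia].
Qed.

Lemma abs_w2Fcos_le n w : (1 <= n)%nat -> Rabs (w2Fcos n w) <= 2 * INR n * (4 * INR n + 3) * PI.
Proof.
  intros Hn; unfold w2Fcos; pose proof (pos_INR n).
  pose proof (abs_Fcos_le (S (S n)) w ltac:(lia)); pose proof (abs_Fcos_le (S n) w ltac:(lia)).
  rewrite Rabs_mult, (Rabs_pos_eq (2 * INR n)) by lra.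
  replace (2 * INR n * (4 * INR n + 3) * PI) with (2 * INR n * ((4 * INR n + 3) * PI)) by ring.
  apply Rmult_le_compat_l; [lra|].
  eapply Rle_trans; [apply Rabs_triang|].
  rewrite Rabs_Ropp, (Rabs_mult (2 * (INR n + 1))), (Rabs_mult (2 * INR n + 1)).
  rewrite (Rabs_pos_eq (2 * (INR n + 1))), (Rabs_pos_eq (2 * INR n + 1)) by lra.
  nra.
Qed.

Lemma is_lim_Fcos m : (1 <= m)%nat -> is_lim (Fcos m) p_infty 0.
Proof.
  intros Hm; apply (is_lim_infty_of_bounded_mul _ (2 * INR m * PI)); intros.
  now apply abs_mul_Fcos_le.
Qed.

Lemma is_lim_mul_Fcos m : (1 <= m)%nat -> is_lim (fun w => w * Fcos m w) p_infty 0.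
Proof.
  intros Hm; apply (is_lim_infty_of_bounded_mul _ (2 * INR m * (4 * INR m + 3) * PI)); intros w.
  replace (w * (w * Fcos m w)) with (w ^ 2 * Fcos m w) by ring.
  rewrite sqr_mul_Fcos by auto; now apply abs_w2Fcos_le.
Qed.

Lemma is_lim_w2Fcos n : (1 <= n)%nat -> is_lim (w2Fcos n) p_infty 0.
Proof.
  intros Hn; unfold w2Fcos.
  replace 0 with (2 * INR n * (2 * (INR n + 1) * 0 - (2 * INR n + 1) * 0)) by ring.
  apply (is_lim_scal_l _ _ _ (Finite _)), is_lim_minus';
    apply (is_lim_scal_l _ _ _ (Finite 0)), is_lim_Fcos; lia.
Qed.

Lemma is_derive_Fcos_S n w : (1 <= n)%nat ->
  is_derive (Fcos (S n)) w (- (w * Fcos n w) / (2 * INR n)).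
Proof.
  intros Hn; replace (- (w * Fcos n w) / (2 * INR n)) with (- Fxsin (S n) w).
  - apply is_derive_Fcos; lia.
  - rewrite Fcos_Fxsin by auto; pose proof (lt_0_INR n ltac:(lia)); field; lra.
Qed.

Lemma is_derive_w2Fcos n w : (1 <= n)%nat ->
  is_derive (w2Fcos n) w (w * ((2 * INR n + 1) * Fcos n w - 2 * INR n * Fcos (S n) w)).
Proof.
  intros Hn; pose proof (lt_0_INR n ltac:(lia)).
  pose proof (is_derive_Fcos_S n w Hn); pose proof (is_derive_Fcos_S (S n) w ltac:(lia)).
  unfold w2Fcos; auto_derive; [repeat split; eexists; eauto|].
  replace (Derive (fun x => Fcos (S n) x) w) with (- (w * Fcos n w) / (2 * INR n))
    by (symmetry; now apply is_derive_unique).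
  replace (Derive (fun x => Fcos (S (S n)) x) w) with (- (w * Fcos (S n) w) / (2 * INR (S n)))
    by (symmetry; now apply is_derive_unique).
  rewrite S_INR; field; lra.
Qed.

(* The coefficients are chosen so that, by [is_derive_Fcos_S] and [is_derive_w2Fcos], all terms
   of the derivative cancel except [- w ^ 3 * Fcos n w ^ 2]. *)
Definition Phi (n : nat) (w : R) : R :=
  - w2Fcos n w ^ 2 / (4 * (INR n + 1)) + INR n * w2Fcos n w * Fcos (S n) w / (INR n + 1)
  + INR n ^ 2 * (2 * INR n + 1 + w ^ 2) / (INR n + 1) * Fcos (S n) w ^ 2.

Lemma is_derive_Phi n w : (1 <= n)%nat -> is_derive (Phi n) w (- (w ^ 3 * Fcos n w ^ 2)).
Proof.
  intros Hn; pose proof (lt_0_INR n ltac:(lia)).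
  pose proof (is_derive_Fcos_S n w Hn); pose proof (is_derive_w2Fcos n w Hn).
  unfold Phi; auto_derive; [repeat split; try (eexists; eauto); lra|].
  replace (Derive (fun x => Fcos (S n) x) w) with (- (w * Fcos n w) / (2 * INR n))
    by (symmetry; now apply is_derive_unique).
  replace (Derive (fun x => w2Fcos n x) w)
    with (w * ((2 * INR n + 1) * Fcos n w - 2 * INR n * Fcos (S n) w))
    by (symmetry; now apply is_derive_unique).
  rewrite <- sqr_mul_Fcos by auto; field; lra.
Qed.

Lemma continuous_cube_mul_Fcos_sqr n w : (1 <= n)%nat ->
  continuous (fun w => w ^ 3 * Fcos n w ^ 2) w.
Proof.
  intros Hn.
  destruct (Req_dec w 0) as [->|Hw].
  - apply (continuous_ext (fun w => w * (w2Fcos n w * Fcos n w))).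
    { intros x; change (x * (w2Fcos n x * Fcos n x) = x ^ 3 * Fcos n x ^ 2).
      rewrite <- sqr_mul_Fcos by auto; ring. }
    apply (continuous_mul_bounded_0 _ (2 * INR n * (4 * INR n + 3) * PI * PI)); intros x.
    rewrite Rabs_mult; pose proof (pos_INR n); pose proof PI_RGT_0.
    apply Rmult_le_compat; try apply Rabs_pos; [apply abs_w2Fcos_le | apply abs_Fcos_le]; auto.
  - apply (continuous_ext_loc _ (fun w => w2Fcos n w ^ 2 / w)).
    { exists (mkposreal _ (Rabs_pos_lt w Hw)); intros y Hy.
      assert (y <> 0).
      { intros ->; change (Rabs (0 - w) < Rabs w) in Hy; rewrite Rminus_0_l, Rabs_Ropp in Hy; lra. }
      change (w2Fcos n y ^ 2 / y = y ^ 3 * Fcos n y ^ 2).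
      rewrite <- sqr_mul_Fcos by auto; field; auto. }
    apply (ex_derive_continuous (K := R_AbsRing) (V := R_NormedModule)).
    pose proof (is_derive_w2Fcos n w Hn); auto_derive; repeat split; auto; eexists; eauto.
Qed.

Lemma is_lim_Phi n : (1 <= n)%nat -> is_lim (Phi n) p_infty 0.
Proof.
  intros Hn; pose proof (lt_0_INR n ltac:(lia)).
  set (a1 := - / (4 * (INR n + 1))); set (a2 := INR n / (INR n + 1)).
  set (a3 := INR n ^ 2 * (2 * INR n + 1) / (INR n + 1)); set (a4 := INR n ^ 2 / (INR n + 1)).
  apply (is_lim_ext (fun w => a1 * (w2Fcos n w * w2Fcos n w) + a2 * (w2Fcos n w * Fcos (S n) w)
                            + a3 * (Fcos (S n) w * Fcos (S n) w)
                            + a4 * ((w * Fcos (S n) w) * (w * Fcos (S n) w)))).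
  { intros w; unfold Phi, a1, a2, a3, a4; field; lra. }
  replace (Finite 0) with (Finite (a1 * (0 * 0) + a2 * (0 * 0) + a3 * (0 * 0) + a4 * (0 * 0)))
    by (f_equal; ring).
  pose proof (is_lim_w2Fcos n Hn); pose proof (is_lim_Fcos (S n) ltac:(lia)).
  pose proof (is_lim_mul_Fcos (S n) ltac:(lia)).
  repeat apply is_lim_plus'; apply (is_lim_scal_l _ _ _ (Finite (0 * 0))); now apply is_lim_mult_R.
Qed.

Lemma Phi_0 n : (1 <= n)%nat ->
  Phi n 0 = 2 * PI ^ 2 * INR n ^ 2 / 16 ^ n * Binomial.C (2 * n - 1) n * Binomial.C (2 * n + 1) n.
Proof.
  intros Hn; destruct n as [|k]; [lia|].
  assert (Hw2 : w2Fcos (S k) 0 = 0) by (rewrite <- sqr_mul_Fcos by lia; ring).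
  unfold Phi; rewrite Hw2, Fcos_0.
  replace (2 * S k + 1)%nat with (S (2 * S k)) by lia.
  rewrite C_odd_central, C_central_half.
  replace (16 ^ S k) with ((4 ^ S k) ^ 2)
    by (rewrite <- pow_mult, Nat.mul_comm, pow_mult; f_equal; ring).
  assert (0 < 4 ^ S k) by (apply pow_lt; lra); pose proof (pos_INR (S k)).
  field; lra.
Qed.

Theorem mainTheorem11 (n : nat) (hn : (1 <= n)%nat) :
  (forall w : R, exists re im : R, IsFourierRe n w re /\ IsFourierIm n w im) /\
  (forall Gre Gim : R -> R,
     (forall w, IsFourierRe n w (Gre w)) ->
     (forall w, IsFourierIm n w (Gim w)) ->
     ImproperInt0 (fun w => w ^ 3 * (Gre w ^ 2 + Gim w ^ 2))
       (2 * PI ^ 2 * INR n ^ 2 / 16 ^ n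
          * Binomial.C (2 * n - 1) n * Binomial.C (2 * n + 1) n)).
Proof.
  split.
  - intros w; exists (Fcos n w), 0; split; apply ImproperIntR_is_RInt_line.
    + now apply is_RInt_line_Fcos.
    + now apply is_RInt_line_g_sin.
  - intros Gre Gim HRe HIm.
    assert (Hre : forall w, Gre w = Fcos n w).
    { intros w; apply (is_RInt_line_unique (fun x => g n x * cos (w * x))).
      - apply ImproperIntR_is_RInt_line, HRe.
      - now apply is_RInt_line_Fcos. }
    assert (Him : forall w, Gim w = 0).
    { intros w; apply (is_RInt_line_unique (fun x => g n x * sin (w * x))).
      - apply ImproperIntR_is_RInt_line, HIm.
      - now apply is_RInt_line_g_sin. }
    replace (fun w => w ^ 3 * (Gre w ^ 2 + Gim w ^ 2)) with (fun w => w ^ 3 * Fcos n w ^ 2)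
      by (apply functional_extensionality; intros w; rewrite Hre, Him; ring).
    rewrite <- Phi_0, <- (Rminus_0_r (Phi n 0)) by exact hn.
    apply ImproperInt0_of_derive.
    + intros w; now apply is_derive_Phi.
    + intros w; now apply continuous_cube_mul_Fcos_sqr.
    + now apply is_lim_Phi.
Qed.
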